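(* Let $Sm(n)$ be the integer whose decimal expansion is the concatenation of $1,2,\ldots,n+1$. For every integer $n\geqslant 0$, put $$l=\lceil \log_{10}(n+2)\rceil,\qquad t_l=10^{l-1}-1,$$ $$\alpha_l=-\frac{10^{2l-1}+9\cdot 10^{l-1}}{(10^l-1)^2},\qquad \mu_l=-\frac{1}{10^l-1},\qquad \theta_l=\frac{s_2-2s_1+s_0}{(10^l-1)^2},$$ where $s_0=Sm(t_l)$, $s_1=Sm(t_l+1)$, $s_2=Sm(t_l+2)$. Then $$Sm(n)=\alpha_l+\mu_l\,(n-t_l)+\theta_l\,10^{l(n-t_l)}.$$
   Context: $Sm(0)=1$, $Sm(1)=12$, $Sm(2)=123$, $\ldots$ (Smarandache consecutive numbers). *)

From mathcomp Require Import all_boot all_order all_algebra.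
Set Implicit Arguments. Unset Strict Implicit. Unset Printing Implicit Defensive.

Fixpoint rdigits (fuel k : nat) : seq nat :=
  match fuel with
  | 0 => [::]
  | f.+1 => if k == 0 then [::] else k %% 10 :: rdigits f (k %/ 10)
  end.

(* Decimal expansion of k >= 1, most significant digit first. *)
Definition decdigits (k : nat) : seq nat := rev (rdigits k k).

Definition fromdigits (s : seq nat) : nat := foldl (fun a d => a * 10 + d) 0 s.

Definition Sm (n : nat) : nat :=
  fromdigits (flatten [seq decdigits k | k <- iota 1 n.+1]).

Example Sm_0 : Sm 0 = 1. Proof. by []. Qed.
Example Sm_1 : Sm 1 = 12. Proof. by []. Qed.

(* Appending the d digits of k+2 to Sm k multiplies it by 10^d, so while k+2
   has exactly l digits, i.e. for t - 1 <= k < 10^l - 2, the sequence obeys the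
   affine recurrence Sm (k+1) = q Sm k + (k+2) with q = 10^l.  In j = k - t it
   is solved by a + b j + C q^j, where a + b j is the unique affine solution;
   since the affine part has zero second difference, C (q - 1)^2 is the second
   difference s2 - 2 s1 + s0, the block being long enough to contain t + 2. *)
From mathcomp Require Import all_boot all_order all_algebra zify ring.
Import GRing.Theory Num.Theory.

Lemma rdigitsK f x : x <= f -> foldr (fun d a => a * 10 + d) 0 (rdigits f x) = x.
Proof.
elim: f x => [|f IHf] x /=; first by rewrite leqn0 => /eqP->.
case: eqP => [->//|/eqP x_neq0 le_xf] /=.
rewrite IHf -?divn_eq //.
have: x %/ 10 < x by apply: ltn_Pdiv; lia.
lia.
Qed.

Lemma fromdigitsK x : fromdigits (decdigits x) = x.
Proof. by rewrite /fromdigits /decdigits foldl_rev rdigitsK. Qed.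

Lemma size_rdigits l f x :
  x <= f -> 10 ^ l <= x < 10 ^ l.+1 -> size (rdigits f x) = l.+1.
Proof.
elim: l f x => [|l IHl] [|f] x /=.
- lia.
- rewrite expn0 expn1 => _ /andP[x_gt0 x_lt10].
  by rewrite gtn_eqF // divn_small //; case: f.
- by rewrite expnS; have := expn_gt0 10 l; lia.
- move=> le_xf /andP[lo hi].
  have x_gt0 : 0 < x by have := expn_gt0 10 l.+1; lia.
  rewrite gtn_eqF //= IHl //.
    have: x %/ 10 < x by apply: ltn_Pdiv; lia.
    lia.
  by rewrite leq_divRL // ltn_divLR // -!expnSr lo hi.
Qed.

Lemma size_decdigits l x : 10 ^ l <= x < 10 ^ l.+1 -> size (decdigits x) = l.+1.
Proof. by rewrite size_rev; apply: size_rdigits. Qed.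

Lemma fromdigits_cat s1 s2 :
  fromdigits (s1 ++ s2) = fromdigits s1 * 10 ^ size s2 + fromdigits s2.
Proof.
rewrite /fromdigits foldl_cat; move: (foldl _ 0 s1) => a.
elim: s2 a => [|d s2 IHs2] a /=; first by rewrite muln1 addn0.
by rewrite IHs2 [in RHS]IHs2 expnS; ring.
Qed.

Lemma SmS k : Sm k.+1 = Sm k * 10 ^ size (decdigits k.+2) + k.+2.
Proof.
have iotaS : iota 1 k.+2 = iota 1 k.+1 ++ [:: k.+2].
  by rewrite -(addn1 k.+1) iotaD add1n addn1.
by rewrite /Sm iotaS map_cat flatten_cat fromdigits_cat /= cats0 fromdigitsK.
Qed.

Lemma SmS_digits l k : 10 ^ l <= k.+2 < 10 ^ l.+1 ->
  Sm k.+1 = Sm k * 10 ^ l.+1 + k.+2.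
Proof. by move=> k_bounds; rewrite SmS (size_decdigits _ _ k_bounds). Qed.

Local Open Scope ring_scope.

Section AffineGeometricRecurrence.

Context {F : fieldType} {q c : F} {x : nat -> F} {N : nat}.
Hypothesis q_neq1 : q != 1.
Hypothesis xS : forall j, (j < N)%N -> x j.+1 = q * x j + (c + j%:R).

Lemma affine_geometric_recE j : (j <= N)%N ->
  x j = - (c * (q - 1) + 1) / (q - 1) ^+ 2 - j%:R / (q - 1)
        + (x 0 + (c * (q - 1) + 1) / (q - 1) ^+ 2) * q ^+ j.
Proof.
have q1_neq0 : q - 1 != 0 by rewrite subr_eq0.
elim: j => [|j IHj] le_jN; first by field.
by rewrite xS // IHj 1?ltnW // [q ^+ j.+1]exprS -[j.+1]addn1 natrD; field.
Qed.

Lemma affine_geometric_rec_diff2E j : (2 <= N)%N -> (j <= N)%N ->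
  x j = - (c * (q - 1) + 1) / (q - 1) ^+ 2 - j%:R / (q - 1)
        + (x 2 - 2 * x 1 + x 0) / (q - 1) ^+ 2 * q ^+ j.
Proof.
move=> le2N le_jN.
have q1_neq0 : q - 1 != 0 by rewrite subr_eq0.
rewrite (affine_geometric_recE _ le_jN) (affine_geometric_recE _ le2N).
rewrite (affine_geometric_recE _ (ltnW le2N)).
by rewrite expr1; field.
Qed.

End AffineGeometricRecurrence.

Theorem corollary1 (n : nat) :
  let l := up_log 10 n.+2 in
  let t := (10 ^ l.-1 - 1)%N in
  let s0 := Sm t in let s1 := Sm t.+1 in let s2 := Sm t.+2 in
  let alpha : rat := - ((10%:R ^+ (2 * l - 1) + 9 * 10%:R ^+ l.-1)
                         / (10%:R ^+ l - 1) ^+ 2) in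
  let mu : rat := - (1 / (10%:R ^+ l - 1)) in
  let theta : rat := (s2%:R - 2 * s1%:R + s0%:R) / (10%:R ^+ l - 1) ^+ 2 in
  (Sm n)%:R = alpha + mu * (n%:R - t%:R) + theta * 10%:R ^+ (l * (n - t)).
Proof.
move=> l t s0 s1 s2 alpha mu theta.
have /andP[lo hi] := @up_log_bounds 10 n.+2 isT isT.
have l_gt0 : (0 < l)%N by rewrite up_log_gt0.
rewrite -/l in lo hi.
have p_gt0 : (0 < 10 ^ l.-1)%N by rewrite expn_gt0.
have qE : (10 ^ l = 10 * 10 ^ l.-1)%N by rewrite -expnS prednK.
pose N := (10 ^ l - 10 ^ l.-1 - 1)%N.
have [le2N le_ntN] : (2 <= N)%N /\ (n - t <= N)%N by move: hi; rewrite qE; lia.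
pose p : rat := 10%:R ^+ l.-1.
have SmS_block j : (j < N)%N ->
    (Sm (t + j.+1))%:R = 10 * p * (Sm (t + j))%:R + (p + 1 + j%:R).
  move=> lt_jN; rewrite addnS (SmS_digits l.-1) prednK //; last first.
    by move: lt_jN; rewrite /N qE; lia.
  rewrite qE -[(t + j).+2]addn2 !natrD !natrM natrB // !natrX.
  by rewrite -/p; ring.
have q_neq1 : 10 * p != 1.
  by rewrite -exprS -natrX pnatr_eq1 -(expn0 10) eqn_exp2l.
have le_tn : (t <= n)%N by move: lo; lia.
have := affine_geometric_rec_diff2E (x := fun j => (Sm (t + j))%:R)
  q_neq1 SmS_block _ le2N le_ntN.
rewrite addn0 addn1 addn2 subnKC // => ->.
have tE : t%:R = p - 1 :> rat by rewrite natrB // natrX.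
have qR : 10%:R ^+ l = 10 * p :> rat by rewrite -natrX qE natrM natrX.
have expE : (2 * l - 1 = (l.-1 * 2).+1)%N by lia.
rewrite /alpha /mu /theta expE [10%:R ^+ _.+1]exprS !exprM qR -/p natrB // tE.
have q1_neq0 : 10 * p - 1 != 0 by rewrite subr_eq0.
by field.
Qed.
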